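(* Let $n\ge2$ and let $a_1,\dots,a_{n-1}\in\mathbb C$ be fixed. For $a\in\mathbb C$ set $g_a(z)=z^n+a^n$ and $f_a(z)=z^n+a_{n-1}z^{n-1}+\cdots+a_1z+a^n$. Then $$\lim_{|a|\to+\infty}d_F\Bigl(Z\bigl(S(a_{n-1}/n)g_a\bigr),Z(f_a)\Bigr)=0.$$
   Context: For $\beta\in\mathbb C$, $(S(\beta)f)(z)=f(\beta+z)$. $Z(f)$ denotes the roots of $f$ counted with multiplicity. For multisets $A=\{u_1,\dots,u_m\}$, $B=\{v_1,\dots,v_m\}$ in $\mathbb C$, $d_F(A,B)=\min_{\sigma}\max_k|u_k-v_{\sigma(k)}|$ over permutations $\sigma$ of $\{1,\dots,m\}$. *)

(* The complex field is modelled by an arbitrary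
   numClosedFieldType C (algebraically closed field with norm/order, e.g. C). *)
From HB Require Import structures.
From mathcomp Require Import all_boot all_order all_algebra.
Set Implicit Arguments. Unset Strict Implicit. Unset Printing Implicit Defensive.
Import Order.TTheory GRing.Theory Num.Theory.
Local Open Scope ring_scope.

Definition shiftp (C : numClosedFieldType) (beta : C) (f : {poly C}) : {poly C} :=
  f \Po ('X + beta%:P).

(* rs is a listing of the roots of the monic polynomial p, with multiplicity:
   p = prod_(r <- rs) (X - r). *)
Definition is_root_multiset (C : numClosedFieldType) (p : {poly C}) (rs : seq C) : Prop :=
  p = \prod_(r <- rs) ('X - r%:P).

Definition match_cost (C : numClosedFieldType) (u w : seq C) : C :=
  \big[Num.max/0]_(i < size u) `|u`_i - w`_i|.

(* d_F(A,B) = min over permutations sigma of max_k |u_k - v_sigma(k)|: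
   minimum of match_cost u w over all rearrangements w of v. *)
Definition dF (C : numClosedFieldType) (u v : seq C) : C :=
  match permutations v with
  | [::] => 0
  | w0 :: ws => foldr (fun w acc => Num.min (match_cost u w) acc) (match_cost u w0) ws
  end.

Definition g_poly (C : numClosedFieldType) (n : nat) (a : C) : {poly C} :=
  'X^n + (a ^+ n)%:P.

(* f_a(z) = z^n + a_{n-1} z^{n-1} + ... + a_1 z + a^n ; coefficients given by c i = a_i *)
Definition f_poly (C : numClosedFieldType) (n : nat) (c : nat -> C) (a : C) : {poly C} :=
  'X^n + \sum_(1 <= i < n) c i *: 'X^i + (a ^+ n)%:P.

From HB Require Import structures.
From mathcomp Require Import all_boot all_order all_algebra ring separable.
Set Implicit Arguments. Unset Strict Implicit. Unset Printing Implicit Defensive.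
Import Order.TTheory GRing.Theory Num.Theory.
Local Open Scope ring_scope.

(* The choice of [b] kills the [z^(n-1)] term of [g_a(z + b) - f_a(z)], so the
   difference is a polynomial [gf_difference] of degree [<= n - 2] that does
   not depend on [a].  Meanwhile the roots [v] of [g_a(z + b)] satisfy
   [|v + b| = |a|] and are [|a|/n]-separated.  A general root perturbation argument (section
   RootPerturbation) then applies: if two monic polynomials of degree [n] differ
   by at most [K (1 + |x|)^(n-2)], and the roots of the first are bounded by [D]
   and [s]-separated with [s] large compared to [K D^(n-2)], then each root of
   either polynomial is [eps]-close to exactly one root of the other, which
   yields an [eps]-matching of the two root lists (section Matching). *)

Section Matching.
Variable C : numClosedFieldType.
Implicit Types (u w : seq C) (e : C).

Lemma match_cost_ge0 u w : 0 <= match_cost u w.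
Proof.
apply: (big_ind (fun x => 0 <= x)) => // x y x_ge0 y_ge0.
by rewrite /Order.max; case: ifP.
Qed.

Lemma match_cost_lt u w e : 0 < e ->
  (forall i, (i < size u)%N -> `|u`_i - w`_i| < e) -> match_cost u w < e.
Proof.
move=> e_gt0 close; apply: (big_ind (fun x => x < e)) => //.
  by move=> x y; rewrite /Order.max; case: ifP.
by move=> i _; exact: close.
Qed.

Local Notation min_fold f b xs := (foldr (fun x acc => Num.min (f x) acc) b xs).

Lemma min_fold_le (T : eqType) (f : T -> C) (b : C) (xs : seq T) :
  (forall x, f x \is Num.real) -> b \is Num.real ->
  [/\ min_fold f b xs \is Num.real, min_fold f b xs <= b
     & forall x, x \in xs -> min_fold f b xs <= f x].
Proof.
move=> f_real b_real; elim: xs => [|y xs [F_real F_le_b F_le]] /=; first by split.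
have := comparable_le_min (Num.min (f y) (min_fold f b xs))
  (real_comparable (f_real y) F_real).
rewrite lexx => /esym/andP[min_le_fy min_le_F].
split; [exact: min_real | exact: le_trans min_le_F F_le_b |].
by move=> x; rewrite inE => /predU1P[-> // | /F_le]; apply: le_trans.
Qed.

Lemma dF_le_match_cost u (v : seq C) w : perm_eq w v -> dF u v <= match_cost u w.
Proof.
rewrite -mem_permutations /dF; case: (permutations v) => [//|w0 ws].
have cost_real x : match_cost u x \is Num.real by apply/ger0_real/match_cost_ge0.
have [_ F_le_w0 F_le] := min_fold_le ws cost_real (cost_real w0).
by rewrite inE => /predU1P[-> | /F_le].
Qed.

(* A matching criterion: if every point of the duplicate-free list [rs1] is
   [e]-close to a point of [rs2] (of the same length), and no point of [rs2] is
   [e]-close to two points of [rs1], then the [e]-closeness pairs [rs1] with a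
   rearrangement of [rs2], hence [dF rs1 rs2 < e]. *)
Lemma dF_lt_of_matching (rs1 rs2 : seq C) e : 0 < e -> uniq rs1 ->
  size rs1 = size rs2 ->
  (forall v, v \in rs1 -> exists2 r, r \in rs2 & `|v - r| < e) ->
  (forall v v' r, v \in rs1 -> v' \in rs1 -> `|v - r| < e -> `|v' - r| < e -> v = v') ->
  dF rs1 rs2 < e.
Proof.
move=> e_gt0 rs1_uniq size_eq near unique_near.
pose partner v := nth 0 rs2 (find (fun r => `|v - r| < e) rs2).
have partnerP v : v \in rs1 -> partner v \in rs2 /\ `|v - partner v| < e.
  move=> v_rs1; have [r r_rs2 vr_close] := near v v_rs1.
  have has_close : has (fun r => `|v - r| < e) rs2 by apply/hasP; exists r.
  by split; [rewrite mem_nth // -has_find | exact: (nth_find 0 has_close)].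
pose w := map partner rs1.
have w_uniq : uniq w.
  rewrite map_inj_in_uniq // => v v' v_rs1 v'_rs1 same.
  have [_ close_v] := partnerP v v_rs1; have [_ close_v'] := partnerP v' v'_rs1.
  by apply: (unique_near v v' (partner v)); rewrite // same.
have w_sub : {subset w <= rs2}.
  by move=> x /mapP[v v_rs1 ->]; have [] := partnerP v v_rs1.
have w_size : (size rs2 <= size w)%N by rewrite size_map size_eq.
have w_perm : perm_eq w rs2.
  by apply: uniq_perm => //; [exact: leq_size_uniq w_uniq w_sub w_size
                             | exact: (uniq_min_size w_uniq w_sub w_size).2].
apply: (le_lt_trans (dF_le_match_cost rs1 w_perm)).
apply: match_cost_lt => // i i_lt; rewrite (nth_map 0) //.
by have [] := partnerP _ (mem_nth 0 i_lt).
Qed.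

End Matching.

Section Estimates.
Variable C : numClosedFieldType.

Lemma horner_norm_le (p : {poly C}) (m : nat) (x : C) : (size p <= m.+1)%N ->
  `|p.[x]| <= (\sum_(i < size p) `|p`_i|) * (1 + `|x|) ^+ m.
Proof.
move=> size_p; rewrite horner_coef mulr_suml.
apply: le_trans (ler_norm_sum _ _ _) _; apply: ler_sum => i _.
rewrite normrM normrX; apply: ler_wpM2l => //.
have x1_ge1 : 1 <= 1 + `|x| by rewrite lerDl.
apply: le_trans (ler_weXn2l x1_ge1 (_ : (i <= m)%N)).
  by rewrite lerXn2r ?nnegrE ?addr_ge0 // lerDr.
by rewrite -ltnS (leq_trans (ltn_ord i)).
Qed.

Lemma exp_le_prod (s : seq C) (P : pred C) (F : C -> C) (k : C) : 0 <= k ->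
  (forall x, x \in s -> P x -> k <= F x) -> k ^+ count P s <= \prod_(x <- s | P x) F x.
Proof.
move=> k_ge0; elim: s => [|y s IH] F_ge; first by rewrite big_nil.
rewrite big_cons /=.
have IH' := IH (fun x xs => F_ge x (mem_behead (s := y :: s) xs)).
case: ifP (F_ge y (mem_head _ _)) => [Py /(_ isT) Fy_ge | _ _]; last by rewrite add0n.
by rewrite add1n exprS ler_pM ?exprn_ge0.
Qed.

Lemma prod_sub_root (rs : seq C) (r : C) : r \in rs -> \prod_(y <- rs) (r - y) = 0.
Proof. by move=> r_rs; rewrite (perm_big _ (perm_to_rem r_rs)) big_cons /= subrr mul0r. Qed.

Lemma norm_1_sub_exp (z : C) (i : nat) : `|z| = 1 -> `|1 - z ^+ i| <= i%:R * `|1 - z|.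
Proof.
move=> z_unit; elim: i => [|i IH]; first by rewrite expr0 subrr normr0 mul0r.
have -> : 1 - z ^+ i.+1 = (1 - z ^+ i) + z ^+ i * (1 - z).
  by rewrite exprS mulrBr mulr1 addrA subrK mulrC.
apply: le_trans (ler_normD _ _) _.
by rewrite normrM normrX z_unit expr1n mul1r -nat1r mulrDl mul1r addrC lerD2l.
Qed.

Lemma unity_root_sep (n : nat) (z : C) : (0 < n)%N -> z ^+ n = 1 -> z != 1 ->
  1 <= n%:R * `|1 - z|.
Proof.
move=> n_gt0 zn1 z_neq1.
have z_unit : `|z| = 1.
  by apply/eqP; rewrite -(pexpr_eq1 n_gt0) // -normrX zn1 normr1.
have sum_pow0 : \sum_(i < n) z ^+ i = 0.
  have /eqP := subrX1 z n; rewrite zn1 subrr eq_sym mulf_eq0 subr_eq0.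
  by rewrite (negPf z_neq1) => /eqP.
have n_as_sum : n%:R = \sum_(i < n) (1 - z ^+ i) :> C.
  by rewrite sumrB sum_pow0 subr0 sumr_const card_ord.
have n_gt0' : 0 < n%:R :> C by rewrite ltr0n.
rewrite -(ler_pM2l n_gt0') mulr1 -[X in X <= _]ger0_norm ?ler0n // {1}n_as_sum.
apply: le_trans (ler_norm_sum _ _ _) _.
apply: le_trans (_ : _ <= \sum_(i < n) (n%:R * `|1 - z|)) _.
  apply: ler_sum => i _; apply: le_trans (norm_1_sub_exp i z_unit) _.
  by rewrite ler_wpM2r // ler_nat ltnW.
by rewrite sumr_const card_ord [X in _ <= X]mulr_natl.
Qed.

Lemma pow_eq_sep (n : nat) (u u' : C) : (0 < n)%N -> u ^+ n = u' ^+ n -> u != u' ->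
  `|u| <= n%:R * `|u - u'|.
Proof.
move=> n_gt0 pow_eq u_neq.
have [-> | u_neq0] := eqVneq u 0; first by rewrite normr0 mulr_ge0.
have ratio_root : (u' / u) ^+ n = 1 by rewrite exprMn exprVn -pow_eq divff ?expf_neq0.
have ratio_neq1 : u' / u != 1.
  by apply: contraNneq u_neq => /(divr1_eq) ->.
have -> : u - u' = u * (1 - u' / u) by rewrite mulrBr mulr1 mulrCA divff ?mulr1.
rewrite normrM mulrCA -[X in X <= _]mulr1 ler_wpM2l //.
exact: unity_root_sep.
Qed.

Lemma exp_gap (K T : C) (m : nat) : 1 <= T -> K * 4 ^+ m.+2 < T ->
  K * T ^+ m < (T / 4) ^+ m.+2.
Proof.
move=> T_ge1 K_lt; have T_gt0 : 0 < T := lt_le_trans ltr01 T_ge1.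
rewrite expr_div_n ltr_pdivlMr ?exprn_gt0 // mulrAC.
apply: lt_le_trans (_ : T * T ^+ m <= _).
  by rewrite ltr_pM2r ?exprn_gt0.
by rewrite !exprS mulrA ler_wpM2r ?exprn_ge0 ?(ltW T_gt0) // ler_pMr.
Qed.

Lemma quarter_le_sub (x d : C) : 1 <= x -> 2 * d <= x -> (1 + x) / 4 <= x - d.
Proof.
move=> x_ge1 far; rewrite ler_pdivrMr ?ltr0n //.
have -> : (x - d) * 4 = (x + x) + (x - 2 * d) * 2 by ring.
by rewrite (le_trans (_ : _ <= x + x)) ?lerD2r // lerDl mulr_ge0 ?subr_ge0.
Qed.

Lemma le_sum_nonneg (xs : seq C) (x : C) :
  (forall y, y \in xs -> 0 <= y) -> x \in xs -> x <= \sum_(y <- xs) y.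
Proof.
move=> xs_ge0 x_xs; rewrite (big_rem x x_xs) /= lerDl big_seq sumr_ge0 // => y y_rem.
exact/xs_ge0/(mem_rem y_rem).
Qed.

(* The numeric conditions of the perturbation theorem, for [D = T + B] and
   [s = T / N], follow from five lower bounds on [T]. *)
Lemma large_enough (T B K N eps : C) (m : nat) :
  0 <= B -> 0 <= K -> 0 < N -> 0 < eps ->
  1 < T -> B < T -> K * 4 ^+ m.+2 < T -> 4 * N * eps < T ->
  K * 6 ^+ m * (4 * N) ^+ m.+1 / eps < T ->
  [/\ 1 <= T + B, K * 4 ^+ m.+2 < T + B, 4 * eps < T / N
    & K * (3 * (T + B)) ^+ m < eps * (T / N / 4) ^+ m.+1].
Proof.
move=> B_ge0 K_ge0 N_gt0 eps_gt0 T_gt1 B_lt K4_lt NE_lt Q_lt.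
have T_le : T <= T + B by rewrite lerDl.
split; [exact: le_trans (ltW T_gt1) T_le | exact: lt_le_trans K4_lt T_le
       | by rewrite ltr_pdivlMr // mulrAC |].
have T_gt0 : 0 < T := lt_trans ltr01 T_gt1.
apply: le_lt_trans (_ : _ <= K * 6 ^+ m * T ^+ m) _.
  rewrite -mulrA -exprMn ler_wpM2l // lerXn2r ?nnegrE ?mulr_ge0 ?addr_ge0 ?(ltW T_gt0) //.
  by rewrite (_ : 6 * T = 3 * (T + T)) ?ler_wpM2l ?lerD2l ?(ltW B_lt) //; ring.
rewrite (_ : T / N / 4 = T / (4 * N)); last by field; rewrite gt_eqF.
rewrite expr_div_n mulrA ltr_pdivlMr ?exprn_gt0 ?mulr_gt0 //.
rewrite (_ : _ * (4 * N) ^+ m.+1 = K * 6 ^+ m * (4 * N) ^+ m.+1 * T ^+ m); last by ring.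
by rewrite [T ^+ m.+1]exprS mulrA ltr_pM2r ?exprn_gt0 // [eps * T]mulrC -ltr_pdivrMr.
Qed.

(* An explicit threshold on [T] (playing [|a|]) beyond which the numeric
   hypotheses of the perturbation theorem hold with [D = T + B], [s = T / N]. *)
Lemma threshold_exists (m : nat) (B K N eps : C) :
  0 <= B -> 0 <= K -> 0 < N -> 0 < eps ->
  exists2 M : C, 0 < M & forall T, M < T ->
    [/\ 1 <= T + B, K * 4 ^+ m.+2 < T + B, 4 * eps < T / N
      & K * (3 * (T + B)) ^+ m < eps * (T / N / 4) ^+ m.+1].
Proof.
move=> B_ge0 K_ge0 N_gt0 eps_gt0.
set thresholds := [:: 1; B; K * 4 ^+ m.+2; 4 * N * eps;
                      K * 6 ^+ m * (4 * N) ^+ m.+1 / eps].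
have K4_ge0 : 0 <= K * 4 ^+ m.+2 by rewrite mulr_ge0 ?exprn_ge0.
have NE_ge0 : 0 <= 4 * N * eps by rewrite !mulr_ge0 ?(ltW N_gt0) ?(ltW eps_gt0).
have Q_ge0 : 0 <= K * 6 ^+ m * (4 * N) ^+ m.+1 / eps.
  by rewrite !mulr_ge0 ?exprn_ge0 ?invr_ge0 ?mulr_ge0 ?(ltW N_gt0) ?(ltW eps_gt0).
have thresholds_ge0 : {in thresholds, forall t, 0 <= t}.
  by move=> t; rewrite !inE => /orP[|/orP[|/or3P[||]]] /eqP->; rewrite ?ler01.
exists (\sum_(t <- thresholds) t).
  by apply: (lt_le_trans ltr01); apply: le_sum_nonneg; rewrite ?inE ?eqxx.
move=> T T_large; apply: large_enough => //;
  by apply: le_lt_trans T_large; apply: le_sum_nonneg; rewrite // !inE eqxx ?orbT.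
Qed.

End Estimates.

Section RootPerturbation.
Variables (C : numClosedFieldType) (m : nat) (rs1 rs2 : seq C) (D s K eps : C).
Hypotheses (size1 : size rs1 = m.+2) (size2 : size rs2 = m.+2) (uniq1 : uniq rs1).
Hypothesis sep1 : forall v v', v \in rs1 -> v' \in rs1 -> v != v' -> s <= `|v - v'|.
Hypothesis bound1 : forall v, v \in rs1 -> `|v| <= D.
Hypothesis close : forall x,
  `|\prod_(v <- rs1) (x - v) - \prod_(r <- rs2) (x - r)| <= K * (1 + `|x|) ^+ m.
Hypotheses (D_ge1 : 1 <= D) (K_ge0 : 0 <= K) (K_lt_D : K * 4 ^+ m.+2 < D).
Hypotheses (eps_gt0 : 0 < eps) (eps_lt : 4 * eps < s).
Hypothesis gap : K * (3 * D) ^+ m < eps * (s / 4) ^+ m.+1.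

Let s_gt0 : 0 < s.
Proof. by apply: lt_trans eps_lt; rewrite mulr_gt0 ?ltr0n. Qed.

Let eps_lt_quarter : eps < s / 4.
Proof. by rewrite ltr_pdivlMr // mulrC. Qed.

Let quarter_add_eps_lt : s / 4 + eps < s.
Proof.
rewrite -subr_gt0 (_ : s - (s / 4 + eps) = (s / 4 - eps) + s / 2); last by field.
by rewrite addr_gt0 ?subr_gt0 ?divr_gt0.
Qed.

Let twice_eps_lt : eps + eps < s.
Proof. by apply: lt_trans quarter_add_eps_lt; rewrite ltrD2r. Qed.

Let D_gt0 : 0 < D.
Proof. exact: lt_le_trans ltr01 D_ge1. Qed.

Lemma sep_eq (v v' : C) : v \in rs1 -> v' \in rs1 -> `|v - v'| < s -> v = v'.
Proof.
move=> v_rs1 v'_rs1; apply: contraTeq => v_neq.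
by rewrite le_gtF ?sep1.
Qed.

Lemma prod_at_root2 (r : C) : r \in rs2 ->
  \prod_(v <- rs1) `|r - v| <= K * (1 + `|r|) ^+ m.
Proof. by move=> r_rs2; have := close r; rewrite (prod_sub_root r_rs2) subr0 normr_prod. Qed.

Lemma prod_at_root1 (v : C) : v \in rs1 ->
  \prod_(r <- rs2) `|v - r| <= K * (1 + `|v|) ^+ m.
Proof. by move=> v_rs1; have := close v; rewrite (prod_sub_root v_rs1) sub0r normrN normr_prod. Qed.

Let D_le_2D : D <= 2 * D.
Proof. by rewrite ler_peMl ?(ltW D_gt0) ?ler1n. Qed.

(* The perturbed roots stay in the disc of radius [2 D]: farther out, every
   factor [|r - v|] exceeds [(1 + |r|)/4], too much for [K (1 + |r|)^m]. *)
Lemma root2_norm_lt (r : C) : r \in rs2 -> `|r| < 2 * D.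
Proof.
move=> r_rs2; have two_D_real : 2 * D \is Num.real by rewrite gtr0_real ?mulr_gt0.
have [far | //] := real_leP two_D_real (normr_real r); exfalso.
have r_ge1 : 1 <= `|r| by apply: le_trans D_ge1 (le_trans D_le_2D far).
have factor_ge v : v \in rs1 -> true -> (1 + `|r|) / 4 <= `|r - v|.
  move=> v_rs1 _; apply: le_trans (lerB_dist _ _).
  apply: le_trans (quarter_le_sub r_ge1 far) _.
  by rewrite lerD2l lerN2 bound1.
have quarter_ge0 : 0 <= (1 + `|r|) / 4 by rewrite divr_ge0 ?addr_ge0.
have := le_trans (exp_le_prod quarter_ge0 factor_ge) (prod_at_root2 r_rs2).
rewrite count_predT size1 lt_geF //.
apply: exp_gap; first by rewrite lerDl.
by apply: lt_le_trans K_lt_D _; rewrite (le_trans D_le_2D (le_trans far _)) ?lerDr.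
Qed.

Lemma perturbation_bound (x : C) : `|x| <= 2 * D -> K * (1 + `|x|) ^+ m <= K * (3 * D) ^+ m.
Proof.
move=> x_le; rewrite ler_wpM2l // lerXn2r ?nnegrE ?addr_ge0 ?mulr_ge0 ?(ltW D_gt0) //.
by rewrite (_ : 3 * D = D + 2 * D) ?lerD //; ring.
Qed.

(* Any point [x] has a root [v0] of the first list such that all other roots
   are at least [s/2] away from [x] (by separation, at most one root is
   within [s/2]). *)
Lemma nearest_root (x : C) :
  exists2 v0, v0 \in rs1 & forall v, v \in rs1 -> v != v0 -> s / 2 <= `|x - v|.
Proof.
have s2_gt0 : 0 < s / 2 by rewrite divr_gt0.
have [/hasP[v0 v0_rs1 v0_close] | /hasPn far] := boolP (has (fun v => `|x - v| < s / 2) rs1).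
  exists v0 => // v v_rs1 v_neq.
  have tri : s <= `|x - v| + `|x - v0|.
    by apply: (le_trans (sep1 v_rs1 v0_rs1 v_neq)); rewrite (distrC x v) ler_distD.
  rewrite -(lerD2r `|x - v0|); apply: le_trans _ tri.
  by rewrite {2}[s]splitr lerD2l (ltW v0_close).
exists (nth 0 rs1 0%N); first by rewrite mem_nth // size1.
by move=> v v_rs1 _; rewrite real_leNgt ?far ?normr_real ?gtr0_real.
Qed.

Lemma root2_near (r : C) : r \in rs2 -> exists2 v, v \in rs1 & `|r - v| < eps.
Proof.
move=> r_rs2; have [v0 v0_rs1 far] := nearest_root r; exists v0 => //.
have others_count : count (fun v => v != v0) rs1 = m.+1.
  apply/eqP; rewrite -eqSS -size1 -(count_predC (pred1 v0)) (count_uniq_mem _ uniq1).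
  by rewrite v0_rs1.
have others_ge : (s / 2) ^+ m.+1 <= \prod_(v <- rs1 | v != v0) `|r - v|.
  by rewrite -others_count exp_le_prod ?divr_ge0 ?ltW.
have quarter_le_half : s / 4 <= s / 2 by rewrite ler_pM2l // lef_pV2 ?posrE ?ler_nat.
have prod_lt : \prod_(v <- rs1) `|r - v| < eps * (s / 2) ^+ m.+1.
  apply: le_lt_trans (prod_at_root2 r_rs2) _.
  apply: le_lt_trans (perturbation_bound (ltW (root2_norm_lt r_rs2))) _.
  apply: lt_le_trans gap _.
  by rewrite ler_wpM2l ?(ltW eps_gt0) // lerXn2r ?nnegrE ?divr_ge0 ?(ltW s_gt0).
rewrite (bigD1_seq v0 v0_rs1 uniq1) /= in prod_lt.
rewrite -(ltr_pM2r (exprn_gt0 m.+1 (divr_gt0 s_gt0 (ltr0n _ 2)))).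
exact: le_lt_trans (ler_wpM2l (normr_ge0 _) others_ge) prod_lt.
Qed.

(* Every root of the first list has a perturbed root within [eps]: some
   perturbed root is within [s/4], and its [eps]-close root must be [v]. *)
Lemma root1_near (v : C) : v \in rs1 -> exists2 r, r \in rs2 & `|v - r| < eps.
Proof.
move=> v_rs1; have quarter_gt0 : 0 < s / 4 by rewrite divr_gt0.
have [r r_rs2 r_close] : exists2 r, r \in rs2 & `|v - r| < s / 4.
  apply/hasP; apply/negPn/negP => /hasPn far.
  have factor_ge r : r \in rs2 -> true -> s / 4 <= `|v - r|.
    by move=> r_rs2 _; rewrite real_leNgt ?far ?normr_real ?gtr0_real.
  have := le_trans (exp_le_prod (ltW quarter_gt0) factor_ge) (prod_at_root1 v_rs1).
  rewrite count_predT size2 lt_geF //.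
  apply: le_lt_trans (perturbation_bound (le_trans (bound1 v_rs1) D_le_2D)) _.
  by apply: lt_trans gap _; rewrite [X in _ < X]exprS ltr_pM2r ?exprn_gt0.
have [v' v'_rs1 v'_close] := root2_near r_rs2.
exists r => //; suff -> : v = v' by rewrite distrC.
apply: sep_eq => //; apply: le_lt_trans (ler_distD r v v') _.
by apply: lt_trans quarter_add_eps_lt; exact: ltrD.
Qed.

Theorem dF_lt_of_perturbation : dF rs1 rs2 < eps.
Proof.
apply: dF_lt_of_matching => //; [by rewrite size1 size2 | exact: root1_near |].
move=> v v' r v_rs1 v'_rs1 v_close v'_close; apply: sep_eq => //.
apply: le_lt_trans (ler_distD r v v') _.
by apply: lt_trans twice_eps_lt; rewrite (distrC r v'); exact: ltrD.
Qed.

End RootPerturbation.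

Section Polys.
Variable C : numClosedFieldType.

Lemma uniq_roots_of_simple (p : {poly C}) (rs : seq C) :
  p = \prod_(r <- rs) ('X - r%:P) -> (forall x, root p x -> p^`().[x] != 0) -> uniq rs.
Proof.
move=> p_eq simple; rewrite -separable_prod_XsubC -p_eq unlock.
exact: Pdiv.ClosedField.root_coprimep.
Qed.

Lemma size_sum_monomials (c : nat -> C) (k : nat) :
  (size (\sum_(1 <= i < k) c i *: 'X^i)%R <= k)%N.
Proof.
apply/leq_sizeP => j k_le_j; rewrite coef_sum big_nat big1 // => i /andP[_ i_lt].
by rewrite coefZ coefXn gtn_eqF ?mulr0 // (leq_trans i_lt k_le_j).
Qed.

Lemma XaddC_exp_top (b : C) (k : nat) : exists2 R : {poly C},
  (size R <= k)%N & ('X + b%:P) ^+ k.+1 = 'X^(k.+1) + (b *+ k.+1) *: 'X^k + R.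
Proof.
elim: k => [|k [R size_R expand]].
  by exists 0; rewrite ?size_poly0 // expr1 expr0 alg_polyC addr0.
exists ((b ^+ 2 *+ k.+1) *: 'X^k + ('X + b%:P) * R).
  rewrite (leq_trans (size_polyD _ _)) // geq_max; apply/andP; split.
    by rewrite (leq_trans (size_scale_leq _ _)) ?size_polyXn.
  by rewrite (leq_trans (size_polyMleq _ _)) // size_XaddC.
rewrite exprS expand !exprS expr0 mulr1 -!mul_polyC !polyCMn polyCM.
ring.
Qed.

Lemma shiftp_g_poly (b a : C) (n : nat) :
  shiftp b (g_poly n a) = ('X + b%:P) ^+ n + (a ^+ n)%:P.
Proof. by rewrite /shiftp /g_poly comp_polyD comp_Xn_poly comp_polyC. Qed.

(* The coefficient [b = a_(n-1)/n] kills the [z^(n-1)] term of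
   [g_a(z + b) - f_a(z)]; what remains has degree [<= n - 2] and does not
   depend on [a]. *)
Definition gf_difference (m : nat) (c : nat -> C) : {poly C} :=
  ('X + (c m.+1 / m.+2%:R)%:P) ^+ m.+2 - 'X^(m.+2) - \sum_(1 <= i < m.+2) c i *: 'X^i.

Lemma shiftp_g_sub_f (m : nat) (c : nat -> C) (a : C) :
  shiftp (c m.+1 / m.+2%:R) (g_poly m.+2 a) - f_poly m.+2 c a = gf_difference m c.
Proof. by rewrite shiftp_g_poly /f_poly /gf_difference; ring. Qed.

Lemma gf_difference_size (m : nat) (c : nat -> C) : (size (gf_difference m c) <= m.+1)%N.
Proof.
set b := c m.+1 / m.+2%:R.
have top_coef : b *+ m.+2 = c m.+1 by rewrite /b -mulr_natr divfK ?pnatr_eq0.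
have [R size_R expand] := XaddC_exp_top b m.+1.
have -> : gf_difference m c = R - \sum_(1 <= i < m.+1) c i *: 'X^i.
  by rewrite /gf_difference expand big_nat_recr //= top_coef; ring.
rewrite (leq_trans (size_polyD _ _)) // size_polyN geq_max size_R.
exact: size_sum_monomials.
Qed.

Lemma size_f_poly (n : nat) (c : nat -> C) (a : C) : (0 < n)%N -> size (f_poly n c a) = n.+1.
Proof.
move=> n_gt0; rewrite /f_poly -addrA size_polyDl size_polyXn // ltnS.
rewrite (leq_trans (size_polyD _ _)) // geq_max size_sum_monomials.
by rewrite (leq_trans (size_polyC_leq1 _)).
Qed.

Lemma root_multiset_size (p : {poly C}) (rs : seq C) :
  is_root_multiset p rs -> size rs = (size p).-1.
Proof. by move=> ->; rewrite size_prod_XsubC. Qed.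

Lemma horner_root_multiset (p : {poly C}) (rs : seq C) (x : C) :
  is_root_multiset p rs -> p.[x] = \prod_(r <- rs) (x - r).
Proof.
by move=> ->; rewrite horner_prod; apply: eq_bigr => r _; rewrite hornerXsubC.
Qed.

End Polys.

Section ShiftedBinomial.
Variables (C : numClosedFieldType) (n : nat) (b a : C) (rs : seq C).
Hypotheses (n_gt0 : (0 < n)%N) (a_neq0 : a != 0).
Hypothesis rs_roots : is_root_multiset (shiftp b (g_poly n a)) rs.
Let rs_prod : shiftp b (g_poly n a) = \prod_(r <- rs) ('X - r%:P) := rs_roots.

Lemma shifted_root_pow (v : C) : v \in rs -> (v + b) ^+ n = - a ^+ n.
Proof.
move=> v_rs; have : root (shiftp b (g_poly n a)) v by rewrite rs_prod root_prod_XsubC.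
by rewrite shiftp_g_poly /root !hornerE addr_eq0 => /eqP.
Qed.

Lemma shifted_root_norm (v : C) : v \in rs -> `|v + b| = `|a|.
Proof.
move=> v_rs; apply/eqP; rewrite -(eqrXn2 n_gt0) // -!normrX.
by rewrite shifted_root_pow // normrN.
Qed.

Lemma shifted_roots_size : size rs = n.
Proof.
by rewrite (root_multiset_size rs_roots) /shiftp size_comp_poly2 ?size_XaddC ?size_XnaddC.
Qed.

Lemma shifted_root_bound (v : C) : v \in rs -> `|v| <= `|a| + `|b|.
Proof. by move=> v_rs; rewrite -(shifted_root_norm v_rs) -{1}(addrK b v) ler_normB. Qed.

(* The roots are simple: the derivative [n (X + b)^(n-1)] only vanishes at
   [-b], which is not a root since [a != 0]. *)
Lemma shifted_roots_uniq : uniq rs.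
Proof.
apply: uniq_roots_of_simple rs_prod _ => x.
rewrite rs_prod root_prod_XsubC -rs_prod => x_rs.
rewrite shiftp_g_poly derivD derivC addr0 deriv_exp derivD derivX derivC addr0 mul1r.
rewrite hornerMn horner_exp !hornerE mulrn_eq0 negb_or -lt0n n_gt0 /= expf_neq0 //.
by rewrite -normr_gt0 shifted_root_norm // normr_gt0.
Qed.

Lemma shifted_roots_sep (v v' : C) : v \in rs -> v' \in rs -> v != v' ->
  `|a| / n%:R <= `|v - v'|.
Proof.
move=> v_rs v'_rs v_neq.
have shifted_neq : v + b != v' + b by apply: contra v_neq => /eqP /addIr ->.
have := pow_eq_sep n_gt0 _ shifted_neq.
rewrite !shifted_root_pow // shifted_root_norm // opprD addrACA subrr addr0 => sep.
by rewrite ler_pdivrMr ?ltr0n // mulrC sep.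
Qed.

End ShiftedBinomial.

Theorem corollary4p6 (C : numClosedFieldType) (n : nat) (c : nat -> C) :
  (2 <= n)%N ->
  forall eps : C, 0 < eps ->
  exists M : C, 0 < M /\
    forall a : C, M < `|a| ->
    forall rs1 rs2 : seq C,
      is_root_multiset (shiftp (c n.-1 / n%:R) (g_poly n a)) rs1 ->
      is_root_multiset (f_poly n c a) rs2 ->
      dF rs1 rs2 < eps.
Proof.
case: n => [|[|m]] //= _ eps eps_gt0.
set b := c m.+1 / m.+2%:R; set N : C := m.+2%:R.
set K := \sum_(i < size (gf_difference m c)) `|(gf_difference m c)`_i|.
have K_ge0 : 0 <= K by rewrite sumr_ge0.
have [M M_gt0 large] := threshold_exists m (normr_ge0 b) K_ge0 (ltr0n _ _ : 0 < N) eps_gt0.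
exists M; split => // a a_large rs1 rs2 rs1_roots rs2_roots.
have [D_ge1 K_lt_D eps_lt gap] := large _ a_large.
have a_neq0 : a != 0 by rewrite -normr_gt0 (lt_trans M_gt0 a_large).
apply: (dF_lt_of_perturbation _ _ _ _ _ _ D_ge1 K_ge0 K_lt_D eps_gt0 eps_lt gap).
- exact: shifted_roots_size rs1_roots.
- by rewrite (root_multiset_size rs2_roots) size_f_poly.
- exact: shifted_roots_uniq rs1_roots.
- exact: shifted_roots_sep rs1_roots.
- exact: shifted_root_bound rs1_roots.
move=> x; rewrite -(horner_root_multiset _ rs1_roots) -(horner_root_multiset _ rs2_roots).
by rewrite -hornerN -hornerD shiftp_g_sub_f horner_norm_le ?gf_difference_size.
Qed.
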